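(* Let $I,J\subset[n]$ be nonempty with $I\cup J=[n]$ and $I\cap J=\emptyset$, and let $x,a\in(\mathbb{R}\cup\{-\infty\})^n$, neither identically $-\infty$. Then $$\operatorname{dist}_H(x,\mathcal H^{IJ}_a)=\Big|\max_{i\in I}(x_i+a_i)-\max_{j\in J}(x_j+a_j)\Big|$$ if at least one of these two maxima is finite, and $\operatorname{dist}_H(x,\mathcal H^{IJ}_a)=0$ otherwise.
   Context: $-\infty+c=-\infty$; $|\pm\infty|=+\infty$. The signed tropical hyperplane of type $(I,J)$ is $\mathcal H^{IJ}_a=\{y\in(\mathbb{R}\cup\{-\infty\})^n:\max_{i\in I}(a_i+y_i)=\max_{j\in J}(a_j+y_j)\}$. Hilbert's projective metric: $d(x,y)=\inf\{\lambda-\mu:\lambda,\mu\in\mathbb{R},\ \mu+y_l\le x_l\le\lambda+y_l\ \forall l\}\in[0,+\infty]$ (and $d(\bot,\bot)=0$); $\operatorname{dist}_H(x,B)=\inf_{y\in B}d(x,y)$. *)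

(* Vectors in (R ∪ {-oo})^n are modelled as
   'I_n -> \bar R with every entry different from +oo. *)
From HB Require Import structures.
From mathcomp Require Import all_boot all_order all_algebra.
From mathcomp Require Import all_classical all_reals.
From mathcomp Require Import ereal.
Set Implicit Arguments. Unset Strict Implicit. Unset Printing Implicit Defensive.
Import Order.TTheory GRing.Theory Num.Theory.
Local Open Scope classical_set_scope.
Local Open Scope ring_scope.
Local Open Scope ereal_scope.

Definition trop_vec (R : realType) (n : nat) (y : 'I_n -> \bar R) : Prop :=
  forall l, y l != +oo.

Definition is_bot (R : realType) (n : nat) (y : 'I_n -> \bar R) : Prop :=
  forall l, y l = -oo.

Definition tmax (R : realType) (n : nat) (K : {set 'I_n})
  (u v : 'I_n -> \bar R) : \bar R :=
  \big[maxe/-oo]_(i in K) (u i + v i).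

Definition trop_hyperplane (R : realType) (n : nat) (I J : {set 'I_n})
  (a : 'I_n -> \bar R) : set ('I_n -> \bar R) :=
  [set y | trop_vec y /\ tmax I a y = tmax J a y].

(* Hilbert's projective metric, with d(⊥,⊥) = 0 and inf ∅ = +oo *)
Definition hilbert (R : realType) (n : nat) (x y : 'I_n -> \bar R) : \bar R :=
  if `[< is_bot x /\ is_bot y >] then 0
  else ereal_inf [set e | exists lam mu : R,
         (forall l, mu%:E + y l <= x l /\ x l <= lam%:E + y l) /\
         e = (lam - mu)%:E].

Definition distH (R : realType) (n : nat) (x : 'I_n -> \bar R)
  (B : set ('I_n -> \bar R)) : \bar R :=
  ereal_inf [set hilbert x y | y in B].

From HB Require Import structures.
From mathcomp Require Import all_boot all_order all_algebra.
From mathcomp Require Import all_classical all_reals.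
From mathcomp Require Import ereal.
From mathcomp Require Import lra.
Set Implicit Arguments. Unset Strict Implicit. Unset Printing Implicit Defensive.
Import Order.TTheory GRing.Theory Num.Theory.
Local Open Scope classical_set_scope.
Local Open Scope ring_scope.
Local Open Scope ereal_scope.

(* A vector y of the hyperplane with mu + y <= x <= lam + y places both
   max_I (x + a) and max_J (x + a) in the window [mu + M, lam + M], where M is
   the common value of max_I (y + a) and max_J (y + a); hence their gap is at
   most lam - mu, i.e. at most d(x, y).  Conversely, when both maxima are finite,
   subtracting their gap c from the I-coordinates of x lands in the hyperplane
   at distance |c|.  When both are -oo, x itself lies in the hyperplane. *)

Section tropical_max.
Variables (R : realType) (n : nat).
Implicit Types (K L : {set 'I_n}) (u v a x : 'I_n -> \bar R).

Lemma bigmaxeDl K (F : 'I_n -> \bar R) (c : \bar R) :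
  c + \big[maxe/-oo]_(i in K) F i = \big[maxe/-oo]_(i in K) (c + F i).
Proof.
apply: (big_morph (fun z => c + z)); last exact: addeNy.
by move=> s t; rewrite adde_maxr.
Qed.

Lemma tmaxC K u v : tmax K u v = tmax K v u.
Proof. by apply: eq_bigr => i _; rewrite addeC. Qed.

Lemma tmaxDl K u a (c : \bar R) :
  c + tmax K u a = tmax K (fun l => c + u l) a.
Proof. by rewrite /tmax bigmaxeDl; apply: eq_bigr => i _; rewrite addeA. Qed.

Lemma le_tmax K u v a : (forall l, u l <= v l) -> tmax K u a <= tmax K v a.
Proof. by move=> uv; apply: le_bigmax2 => i _; rewrite leeD2r. Qed.

Lemma tmax_neq_pinfty K u v : trop_vec u -> trop_vec v -> tmax K u v != +oo.
Proof.
move=> tu tv; apply: (big_ind (fun z => z != +oo)) => // [s t ? ?|i _].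
  by rewrite /Order.max; case: ifP.
by move: (tu i) (tv i); case: (u i); case: (v i).
Qed.

Definition shift_on K (c : R) x : 'I_n -> \bar R :=
  fun l => if l \in K then x l + c%:E else x l.

Lemma trop_vec_shift_on K c x : trop_vec x -> trop_vec (shift_on K c x).
Proof. by move=> tx l; rewrite /shift_on; case: ifP => _; move: (tx l); case: (x l). Qed.

Lemma tmax_shift_on K c x a : tmax K (shift_on K c x) a = tmax K x a + c%:E.
Proof.
by rewrite addeC tmaxDl; apply: eq_bigr => i iK; rewrite /shift_on iK (addeC (x i)).
Qed.

Lemma tmax_shift_on_disjoint K L c x a : (K :&: L)%SET = finset.set0 ->
  tmax L (shift_on K c x) a = tmax L x a.
Proof.
move=> KL0; apply: eq_bigr => i iL; rewrite /shift_on.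
by have /setP/(_ i) := KL0; rewrite !inE iL andbT => ->.
Qed.

Lemma abse_sub_le_window (A B M : \bar R) (lam mu : R) :
  M != +oo -> (A \is a fin_num \/ B \is a fin_num) ->
  mu%:E + M <= A <= lam%:E + M -> mu%:E + M <= B <= lam%:E + M ->
  `|A - B| <= (lam - mu)%:E.
Proof.
move=> Mfin ABfin /andP[AM MA] /andP[BM MB].
case: A ABfin AM MA => [A| |]; case: B BM MB => [B| |];
  case: M Mfin => [M| |] //= _; last by move=> _ _ [].
rewrite !lee_fin => ? ? _ ? ?.
by rewrite ler_norml; apply/andP; split; lra.
Qed.

End tropical_max.

Section hilbert_metric.
Variables (R : realType) (n : nat).
Implicit Types (K : {set 'I_n}) (x y : 'I_n -> \bar R) (B : set ('I_n -> \bar R)).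

Lemma hilbertE x y : ~ is_bot x -> hilbert x y = ereal_inf [set e | exists lam mu : R,
  (forall l, mu%:E + y l <= x l /\ x l <= lam%:E + y l) /\ e = (lam - mu)%:E].
Proof. by move=> nbx; rewrite /hilbert asboolF // => -[]. Qed.

Lemma hilbert_ub x y (lam mu : R) : ~ is_bot x ->
  (forall l, mu%:E + y l <= x l /\ x l <= lam%:E + y l) ->
  hilbert x y <= (lam - mu)%:E.
Proof.
by move=> nbx xy; rewrite hilbertE //; apply: ereal_inf_lbound; exists lam, mu.
Qed.

Lemma hilbert_lb x y z : ~ is_bot x ->
  (forall lam mu : R, (forall l, mu%:E + y l <= x l /\ x l <= lam%:E + y l) ->
    z <= (lam - mu)%:E) ->
  z <= hilbert x y.
Proof.
by move=> nbx zle; rewrite hilbertE //; apply/ereal_infP => _ [lam [mu [/zle ? ->]]].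
Qed.

Lemma finite_entry x : trop_vec x -> ~ is_bot x -> exists l, x l \is a fin_num.
Proof.
move=> tx nbx; apply: contrapT => nofin; apply: nbx => l.
by move: (tx l); case E: (x l) => [r| |] // _; case: nofin; exists l; rewrite E.
Qed.

Lemma hilbert_ge0 x y : trop_vec x -> ~ is_bot x -> 0 <= hilbert x y.
Proof.
move=> tx nbx; apply: hilbert_lb => // lam mu xy.
have [l] := finite_entry tx nbx; case: (xy l).
by case: (x l) => [r| |] //; case: (y l) => [s| |] //=; rewrite !lee_fin => ? ? _; lra.
Qed.

Lemma hilbert_shift_on x K c : ~ is_bot x -> hilbert x (shift_on K c x) <= `|c|%:E.
Proof.
move=> nbx; have [c0|c0] := lerP 0 c.
- rewrite (_ : `|c| = 0 - - c)%R; last by rewrite ger0_norm // sub0r opprK.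
  apply: hilbert_ub => // l; rewrite /shift_on.
  by case: ifP => _; case: (x l) => [r| |] //=; rewrite !lee_fin; split; lra.
- rewrite (_ : `|c| = - c - 0)%R; last by rewrite ltr0_norm // subr0.
  apply: hilbert_ub => // l; rewrite /shift_on.
  by case: ifP => _; case: (x l) => [r| |] //=; rewrite !lee_fin; split; lra.
Qed.

Lemma hilbert_refl x : trop_vec x -> ~ is_bot x -> hilbert x x = 0.
Proof.
move=> tx nbx; apply/le_anti; rewrite hilbert_ge0 // andbT.
apply: le_trans (hilbert_ub (lam := 0%R) (mu := 0%R) nbx _) _; last by rewrite subrr.
by move=> l; rewrite add0e.
Qed.

Lemma distH_ub x B y : B y -> distH x B <= hilbert x y.
Proof. by move=> By; apply: ereal_inf_lbound; exists y. Qed.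

Lemma distH_lb x B z : (forall y, B y -> z <= hilbert x y) -> z <= distH x B.
Proof. by move=> zle; apply/ereal_infP => _ [y /zle ? <-]. Qed.

End hilbert_metric.

Section hyperplane.
Variables (R : realType) (n : nat) (I J : {set 'I_n}).
Implicit Types (x y a : 'I_n -> \bar R).

Lemma hilbert_hyperplane_ge x a y : trop_vec a -> ~ is_bot x ->
  trop_hyperplane I J a y ->
  (tmax I x a \is a fin_num \/ tmax J x a \is a fin_num) ->
  `|tmax I x a - tmax J x a| <= hilbert x y.
Proof.
move=> ta nbx [ty yIJ] xfin; apply: hilbert_lb => // lam mu xy.
have window K : mu%:E + tmax K y a <= tmax K x a <= lam%:E + tmax K y a.
  by rewrite !tmaxDl; apply/andP; split; apply: le_tmax => l; case: (xy l).
apply: (abse_sub_le_window (M := tmax I y a)); first exact: tmax_neq_pinfty.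
- exact: xfin.
- exact: window.
- by rewrite [tmax I y a]tmaxC yIJ tmaxC; exact: window.
Qed.

Lemma distH_hyperplane_le x a (A B : R) :
  (I :&: J)%SET = finset.set0 -> trop_vec x -> ~ is_bot x ->
  tmax I x a = A%:E -> tmax J x a = B%:E ->
  distH x (trop_hyperplane I J a) <= `|A - B|%:E.
Proof.
move=> IJ0 tx nbx xIA xJB; set y := shift_on I (B - A) x.
have yIJ : tmax I a y = tmax J a y.
  rewrite tmaxC tmax_shift_on xIA tmaxC tmax_shift_on_disjoint // xJB.
  by congr (_%:E); lra.
apply: le_trans (distH_ub _ (conj (trop_vec_shift_on _ _ tx) yIJ)) _.
by rewrite distrC; exact: hilbert_shift_on.
Qed.

End hyperplane.

Theorem proposition5p3 (R : realType) (n : nat) (I J : {set 'I_n})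
  (x a : 'I_n -> \bar R) :
  I != finset.set0 -> J != finset.set0 ->
  (I :|: J)%SET = finset.setT -> (I :&: J)%SET = finset.set0 ->
  trop_vec x -> trop_vec a -> ~ is_bot x -> ~ is_bot a ->
  ((tmax I x a \is a fin_num \/ tmax J x a \is a fin_num) ->
     distH x (trop_hyperplane I J a) = `|tmax I x a - tmax J x a|) /\
  (~ (tmax I x a \is a fin_num \/ tmax J x a \is a fin_num) ->
     distH x (trop_hyperplane I J a) = 0).
Proof.
move=> _ _ _ IJ0 tx ta nbx _.
have lower : tmax I x a \is a fin_num \/ tmax J x a \is a fin_num ->
    `|tmax I x a - tmax J x a| <= distH x (trop_hyperplane I J a).
  by move=> xfin; apply: distH_lb => y yH; exact: hilbert_hyperplane_ge.
move: lower (tmax_neq_pinfty I tx ta) (tmax_neq_pinfty J tx ta).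
case EA: (tmax I x a) => [A| |]; case EB: (tmax J x a) => [B| |] //= lower _ _.
- split=> [xfin|[]]; last by left.
  by apply/le_anti; rewrite lower ?andbT; [exact: distH_hyperplane_le | left].
- split=> [xfin|[]]; last by left.
  by apply/le_anti; rewrite leey lower //; left.
- split=> [xfin|[]]; last by right.
  by apply/le_anti; rewrite leey lower //; right.
- split=> [[] //|_].
  have xH : trop_hyperplane I J a x by split; rewrite // !(tmaxC _ a) EA EB.
  apply/le_anti/andP; split; last by apply: distH_lb => y _; exact: hilbert_ge0.
  by rewrite -(hilbert_refl tx nbx); exact: distH_ub.
Qed.
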